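(* Let $(\delta_n)_{n\ge1}$ be real numbers with $1<\delta_n\to\infty$. Then there exist a nontrivial centralizer $\Omega:\ell_2\to\omega$, numbers $\kappa(n)$ with $\kappa(n)\le\delta_n$ for all $n$ and $\kappa(n)\to\infty$, and a sequence $(a_n)_{n=1}^\infty\subseteq\ell_2$ of non-null vectors with $\operatorname{supp}a_n\subseteq\{1,\dots,n\}$ such that $$\Omega(a_n)=-2a_n\cdot\log\kappa(n)\quad\text{for all }n.$$
   Context: $\omega$ denotes the space of all complex sequences. A centralizer on $\ell_2$ is a (homogeneous) map $\Omega:\ell_2\to\omega$ for which there is $C>0$ with $\Omega(ab)-a\Omega(b)\in\ell_2$ and $\|\Omega(ab)-a\Omega(b)\|_{\ell_2}\le C\|a\|_\infty\|b\|_{\ell_2}$ for all $a\in\ell_\infty$, $b\in\ell_2$ (coordinatewise products). $\Omega$ is trivial if there is a linear (possibly unbounded) map $L:\ell_2\to\omega$ with $\sup_{\|x\|_{\ell_2}\le1}\|\Omega(x)-L(x)\|_{\ell_2}<\infty$, and nontrivial otherwise. *)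

From Stdlib Require Import Reals.
From Coquelicot Require Import Coquelicot.
Open Scope R_scope.

(* omega: the space of all complex sequences (indexed by nat, starting at 0) *)
Definition seqC := nat -> C.

Definition sadd (x y : seqC) : seqC := fun k => Cplus (x k) (y k).
Definition ssub (x y : seqC) : seqC := fun k => Cminus (x k) (y k).
Definition smul (x y : seqC) : seqC := fun k => Cmult (x k) (y k).
Definition sscal (l : C) (x : seqC) : seqC := fun k => Cmult l (x k).

Definition in_l2 (x : seqC) : Prop := ex_series (fun k => (Cmod (x k))^2).
Definition l2norm (x : seqC) : R := sqrt (Series (fun k => (Cmod (x k))^2)).

Definition in_linf (a : seqC) : Prop := exists M : R, forall k, Cmod (a k) <= M.
Definition linfnorm (a : seqC) : R := real (Sup_seq (fun k => Cmod (a k))).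

Definition homogeneous (Om : seqC -> seqC) : Prop :=
  forall (l : C) (x : seqC), in_l2 x -> forall k, Om (sscal l x) k = Cmult l (Om x k).

Definition centralizer (Om : seqC -> seqC) : Prop :=
  homogeneous Om /\
  exists Cst : R, 0 < Cst /\
    forall a b : seqC, in_linf a -> in_l2 b ->
      in_l2 (ssub (Om (smul a b)) (smul a (Om b))) /\
      l2norm (ssub (Om (smul a b)) (smul a (Om b))) <= Cst * linfnorm a * l2norm b.

Definition linear_on_l2 (L : seqC -> seqC) : Prop :=
  (forall x y, in_l2 x -> in_l2 y -> forall k, L (sadd x y) k = Cplus (L x k) (L y k)) /\
  (forall (l : C) x, in_l2 x -> forall k, L (sscal l x) k = Cmult l (L x k)).

Definition trivial_centralizer (Om : seqC -> seqC) : Prop :=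
  exists L : seqC -> seqC, linear_on_l2 L /\
    exists K : R, forall x, in_l2 x -> l2norm x <= 1 ->
      in_l2 (ssub (Om x) (L x)) /\ l2norm (ssub (Om x) (L x)) <= K.

Definition nontrivial_centralizer (Om : seqC -> seqC) : Prop :=
  centralizer Om /\ ~ trivial_centralizer Om.

(* The witness is the Kalton-Peck map  Omega(x)_k = 2 x_k ln (|x_k|^2 / ||x||^2).
   A vector whose nonzero coordinates all have modulus ||x|| / sqrt m is an eigenvector
   of Omega with eigenvalue -2 ln m, so a_n := the normalised indicator of {0, ..., m-1},
   with kappa(n) = m the largest integer <= min (n, delta_n), does the job.

   Omega is a centralizer: the k-th coordinate of Omega(ab) - a Omega(b) is
   a_k b_k 2 ln (|a_k|^2 ||b||^2 / ||ab||^2), and the elementary bound w ln(w)^2 <= 4 on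
   (0, 1] controls it by 6 ||a||_oo ||b||_2.

   Omega is nontrivial: if ||Omega x - L x|| <= K on the unit ball with L linear, then
   testing on the unit vectors e_i gives |L(e_i)_i| <= K, while testing on
   n^(-1/2) sum_(i<n) eps_i e_i, where the signs eps_i are chosen greedily so that
   ||sum eps_i w_i||^2 >= sum ||w_i||^2, gives (2 ln n - K)^2 <= K^2, false for large n. *)

From Stdlib Require Import Reals Lra Lia FunctionalExtensionality.
From Coquelicot Require Import Coquelicot.
Open Scope R_scope.

Fixpoint fsum (f : nat -> R) (n : nat) : R :=
  match n with O => 0 | S p => fsum f p + f p end.

Lemma fsum_S_sum_n f n : fsum f (S n) = sum_n f n.
Proof.
  rewrite sum_n_Reals; induction n as [|n IH]; simpl in *; [lra|].
  rewrite <- IH; simpl; lra.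
Qed.

Lemma fsum_ext f g n : (forall k, (k < n)%nat -> f k = g k) -> fsum f n = fsum g n.
Proof. induction n; intros H; simpl; auto. rewrite IHn, H; auto. Qed.

Lemma fsum_plus f g n : fsum (fun k => f k + g k) n = fsum f n + fsum g n.
Proof. induction n; simpl; lra. Qed.

Lemma fsum_scal_l c f n : fsum (fun k => c * f k) n = c * fsum f n.
Proof. induction n; simpl; [ring|]. rewrite IHn; ring. Qed.

Lemma fsum_const c n : fsum (fun _ => c) n = INR n * c.
Proof. induction n; simpl fsum; [simpl; ring|]. rewrite IHn, S_INR; ring. Qed.

Lemma fsum_le f g n : (forall k, (k < n)%nat -> f k <= g k) -> fsum f n <= fsum g n.
Proof.
  induction n; intros H; simpl; [lra|].
  assert (fsum f n <= fsum g n) by (apply IHn; auto).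
  assert (f n <= g n) by auto. lra.
Qed.

Lemma fsum_nonneg f n : (forall k, 0 <= f k) -> 0 <= fsum f n.
Proof. intros H. rewrite <- (Rmult_0_r (INR n)), <- fsum_const. apply fsum_le; auto. Qed.

Lemma fsum_term_le f n i : (forall k, 0 <= f k) -> (i < n)%nat -> f i <= fsum f n.
Proof.
  intros H; induction n; intros Hi; [lia|]; simpl.
  destruct (Nat.eq_dec i n) as [->|Hne].
  - pose proof (fsum_nonneg f n H). lra.
  - assert (f i <= fsum f n) by (apply IHn; lia). specialize (H n). lra.
Qed.

Lemma fsum_kronecker f n k : (k < n)%nat ->
  fsum (fun i => if Nat.eqb i k then f i else 0) n = f k.
Proof.
  intros Hk. induction n; [lia|]; simpl.
  destruct (Nat.eqb_spec n k) as [->|Hne].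
  - rewrite (fsum_ext _ (fun _ => 0)), fsum_const; [ring|].
    intros i Hi. destruct (Nat.eqb_spec i k); [lia|auto].
  - rewrite IHn by lia. ring.
Qed.

Lemma is_series_fsum f n : (forall k, (n <= k)%nat -> f k = 0) -> is_series f (fsum f n).
Proof.
  intros H.
  assert (Hstable : forall j, fsum f (n + j) = fsum f n).
  { induction j; [now rewrite Nat.add_0_r|].
    rewrite Nat.add_succ_r; simpl. rewrite IHj, (H (n + j)%nat) by lia. ring. }
  assert (Hlim : is_lim_seq (sum_n f) (fsum f n)).
  { apply (is_lim_seq_ext_loc (fun _ => fsum f n)); [|apply is_lim_seq_const].
    exists n; intros m Hm.
    rewrite <- fsum_S_sum_n. replace (S m) with (n + (S m - n))%nat by lia. auto. }
  exact Hlim.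
Qed.

Lemma fsum_le_Series f n : (forall k, 0 <= f k) -> ex_series f -> fsum f n <= Series f.
Proof.
  intros Hf Hs. set (g := fun k => if Nat.ltb k n then f k else 0).
  assert (Hg : Series g = fsum f n).
  { apply is_series_unique. rewrite (fsum_ext f g n).
    - apply is_series_fsum. intros k Hk. unfold g. destruct (Nat.ltb_spec k n); [lia|auto].
    - intros k Hk. unfold g. destruct (Nat.ltb_spec k n); [auto|lia]. }
  rewrite <- Hg. apply Series_le; auto.
  intros k. unfold g. destruct (Nat.ltb k n); specialize (Hf k); lra.
Qed.

Lemma ex_series_nonneg_le (f g : nat -> R) :
  (forall k, 0 <= f k <= g k) -> ex_series g -> ex_series f.
Proof.
  intros H Hg. apply (ex_series_le f g); auto. intros k.
  change (norm (f k)) with (Rabs (f k)). rewrite Rabs_pos_eq; apply H.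
Qed.

(** * Logarithmic inequalities *)

Lemma mul_ln_sqr_le w : 0 < w -> w <= 1 -> w * ln w ^ 2 <= 4.
Proof.
  intros Hw Hw1. set (y := - ln w).
  assert (Hy : 0 <= y) by (unfold y; pose proof (ln_le w 1 Hw Hw1); rewrite ln_1 in *; lra).
  (* [exp (y/2) >= 1 + y/2 >= y/2], squared: [/ w = exp y >= y^2/4]. *)
  assert (Hexp : exp (y / 2) ^ 2 * w = 1).
  { replace (exp (y / 2) ^ 2) with (exp (y / 2 + y / 2)) by (rewrite exp_plus; ring).
    replace (y / 2 + y / 2) with y by field.
    unfold y. rewrite exp_Ropp, exp_ln by lra. field. lra. }
  assert (Hhalf : y / 2 <= exp (y / 2)) by (pose proof (exp_ineq1_le (y / 2)); lra).
  assert (Hsq : (y / 2) ^ 2 <= exp (y / 2) ^ 2) by (apply pow_incr; lra).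
  replace (ln w ^ 2) with (y ^ 2) by (unfold y; ring). nra.
Qed.

Lemma mul_ln_ratio_sqr_le p q : 0 < p -> p <= q -> p * ln (q / p) ^ 2 <= 4 * q.
Proof.
  intros Hp Hpq. set (w := p / q).
  assert (Hw : 0 < w) by (unfold w; apply Rdiv_lt_0_compat; lra).
  assert (Hw1 : w <= 1).
  { unfold w, Rdiv. apply (Rmult_le_reg_r q); [lra|]. rewrite Rmult_assoc, Rinv_l; lra. }
  replace (ln (q / p)) with (- ln w) by (unfold w; rewrite <- ln_Rinv by auto; f_equal; field; lra).
  replace p with (q * w) at 1 by (unfold w; field; lra).
  pose proof (mul_ln_sqr_le w Hw Hw1). nra.
Qed.

Lemma mul_ln_scaled_sqr_le al M r : 0 < al -> al <= M -> 0 < r -> 1 <= M * r ->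
  al * ln (al * r) ^ 2 <= 4 * M + al * ln (M * r) ^ 2.
Proof.
  intros Hal HM Hr HMr.
  assert (0 <= al * ln (M * r) ^ 2) by (apply Rmult_le_pos; [lra|apply pow2_ge_0]).
  destruct (Rle_dec (al * r) 1) as [Hle|Hgt].
  - pose proof (mul_ln_ratio_sqr_le al (/ r) Hal) as Hratio.
    replace (/ r / al) with (/ (al * r)) in Hratio by (field; lra).
    rewrite ln_Rinv in Hratio by nra.
    assert (/ r <= M) by (apply (Rmult_le_reg_r r); [lra|]; rewrite Rinv_l; lra).
    assert (al <= / r) by (apply (Rmult_le_reg_r r); [lra|]; rewrite Rinv_l; lra).
    replace ((- ln (al * r)) ^ 2) with (ln (al * r) ^ 2) in Hratio by ring.
    specialize (Hratio ltac:(lra)). lra.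
  - assert (0 < ln (al * r)) by (rewrite <- ln_1; apply ln_increasing; lra).
    assert (ln (al * r) <= ln (M * r)) by (apply ln_le; nra).
    assert (ln (al * r) ^ 2 <= ln (M * r) ^ 2) by (apply pow_incr; lra).
    nra.
Qed.

Definition sqnorm (x : seqC) : R := Series (fun k => Cmod (x k) ^ 2).

Lemma l2norm_sqr (x : seqC) : in_l2 x -> l2norm x ^ 2 = sqnorm x.
Proof.
  intros Hx. apply pow2_sqrt.
  apply (fsum_le_Series _ 0); auto. intros; apply pow2_ge_0.
Qed.

Lemma fsum_Cmod_sqr_le_sqnorm (x : seqC) n :
  in_l2 x -> fsum (fun k => Cmod (x k) ^ 2) n <= sqnorm x.
Proof. intros Hx. apply fsum_le_Series; auto. intros; apply pow2_ge_0. Qed.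

Lemma Cmod_sqr_le_sqnorm (x : seqC) k : in_l2 x -> Cmod (x k) ^ 2 <= sqnorm x.
Proof.
  intros Hx. eapply Rle_trans; [|apply (fsum_Cmod_sqr_le_sqnorm x (S k) Hx)].
  apply (fsum_term_le (fun k => Cmod (x k) ^ 2)); [intros; apply pow2_ge_0|lia].
Qed.

Lemma Cmod_le_l2norm (x : seqC) k : in_l2 x -> Cmod (x k) <= l2norm x.
Proof.
  intros Hx. rewrite <- (sqrt_pow2 (Cmod (x k))) by apply Cmod_ge_0.
  apply sqrt_le_1_alt, Cmod_sqr_le_sqnorm, Hx.
Qed.

Lemma sqnorm_fin (x : seqC) n : (forall k, (n <= k)%nat -> x k = 0) ->
  in_l2 x /\ sqnorm x = fsum (fun k => Cmod (x k) ^ 2) n.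
Proof.
  intros H. assert (Hs : is_series (fun k => Cmod (x k) ^ 2) (fsum (fun k => Cmod (x k) ^ 2) n)).
  { apply is_series_fsum. intros k Hk. rewrite H, Cmod_0 by auto. ring. }
  split; [eexists; exact Hs|apply is_series_unique, Hs].
Qed.

Lemma sqnorm_flat (x : seqC) m t : (forall k, (k < m)%nat -> Cmod (x k) = t) ->
  (forall k, (m <= k)%nat -> x k = 0) -> in_l2 x /\ sqnorm x = INR m * t ^ 2.
Proof.
  intros Ht H0. destruct (sqnorm_fin x m H0) as [Hx ->]. split; auto.
  rewrite <- fsum_const. apply fsum_ext. intros k Hk. now rewrite Ht.
Qed.

Lemma sqnorm_sscal l (x : seqC) : sqnorm (sscal l x) = Cmod l ^ 2 * sqnorm x.
Proof.
  unfold sqnorm, sscal. rewrite <- Series_scal_l. apply Series_ext; intros k.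
  rewrite Cmod_mult. ring.
Qed.

Lemma in_l2_sscal l (x : seqC) : in_l2 x -> in_l2 (sscal l x).
Proof.
  intros Hx. apply (ex_series_ext (fun k => Cmod l ^ 2 * Cmod (x k) ^ 2)).
  - intros k. unfold sscal. rewrite Cmod_mult, Rpow_mult_distr. reflexivity.
  - exact (ex_series_scal_l (Cmod l ^ 2) _ Hx).
Qed.

Lemma linfnorm_ge (a : seqC) k : in_linf a -> Cmod (a k) <= linfnorm a.
Proof.
  intros [M HM]. unfold linfnorm.
  pose proof (Sup_seq_correct (fun k => Cmod (a k))) as Hsup.
  destruct (Sup_seq (fun k => Cmod (a k))) as [r| |]; simpl in Hsup |- *.
  - destruct (Rle_dec (Cmod (a k)) r) as [Hle|Hgt]; auto.
    assert (Heps : 0 < Cmod (a k) - r) by lra.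
    destruct (Hsup (mkposreal _ Heps)) as [Hub _]. specialize (Hub k). simpl in Hub. lra.
  - destruct (Hsup M) as [j Hj]. specialize (HM j). lra.
  - specialize (Hsup (Cmod (a 0%nat)) 0%nat). lra.
Qed.

Lemma linfnorm_nonneg (a : seqC) : in_linf a -> 0 <= linfnorm a.
Proof. intros Ha. eapply Rle_trans; [apply (Cmod_ge_0 (a 0%nat))|apply linfnorm_ge, Ha]. Qed.

Lemma Cmod_smul_sqr_le (a b : seqC) k : in_linf a ->
  0 <= Cmod (smul a b k) ^ 2 <= linfnorm a ^ 2 * Cmod (b k) ^ 2.
Proof.
  intros Ha. split; [apply pow2_ge_0|].
  unfold smul. rewrite Cmod_mult, Rpow_mult_distr.
  apply Rmult_le_compat_r; [apply pow2_ge_0|].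
  apply pow_incr. split; [apply Cmod_ge_0|apply linfnorm_ge, Ha].
Qed.

Lemma in_l2_smul (a b : seqC) : in_linf a -> in_l2 b -> in_l2 (smul a b).
Proof.
  intros Ha Hb. apply (ex_series_nonneg_le _ (fun k => linfnorm a ^ 2 * Cmod (b k) ^ 2)).
  - intros k. apply Cmod_smul_sqr_le, Ha.
  - exact (ex_series_scal_l (linfnorm a ^ 2) _ Hb).
Qed.

Lemma sqnorm_smul_le (a b : seqC) :
  in_linf a -> in_l2 b -> sqnorm (smul a b) <= linfnorm a ^ 2 * sqnorm b.
Proof.
  intros Ha Hb. unfold sqnorm. rewrite <- Series_scal_l. apply Series_le.
  - intros k. apply Cmod_smul_sqr_le, Ha.
  - exact (ex_series_scal_l (linfnorm a ^ 2) _ Hb).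
Qed.

(** * The Kalton-Peck centralizer *)

(* At [x k = 0] the junk value [ln 0] is multiplied by [0]. *)
Definition kalton_peck (x : seqC) : seqC :=
  fun k => (x k * RtoC (2 * ln (Cmod (x k) ^ 2 / sqnorm x)))%C.

Lemma Cmod_mul_RtoC_sqr (z : C) (r : R) : Cmod (z * RtoC r) ^ 2 = Cmod z ^ 2 * r ^ 2.
Proof. rewrite Cmod_mult, Cmod_R, Rpow_mult_distr, pow2_abs. reflexivity. Qed.

Lemma kalton_peck_homogeneous : homogeneous kalton_peck.
Proof.
  intros l x _ k. unfold kalton_peck. rewrite sqnorm_sscal.
  destruct (Req_dec (Cmod l) 0) as [Hl|Hl].
  - apply Cmod_eq_0 in Hl. unfold sscal. rewrite Hl. ring.
  - (* no positivity of [sqnorm x] is needed: [/ 0 = 0] on both sides *)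
    replace (Cmod (sscal l x k) ^ 2 / (Cmod l ^ 2 * sqnorm x)) with (Cmod (x k) ^ 2 / sqnorm x).
    + unfold sscal. ring.
    + unfold sscal, Rdiv. rewrite Cmod_mult, Rinv_mult, Rpow_mult_distr.
      replace (Cmod l ^ 2 * Cmod (x k) ^ 2 * (/ Cmod l ^ 2 * / sqnorm x))
        with (Cmod (x k) ^ 2 * / sqnorm x * (Cmod l ^ 2 * / Cmod l ^ 2)) by ring.
      rewrite Rinv_r by (apply pow_nonzero, Hl). ring.
Qed.

Lemma kalton_peck_flat (x : seqC) m t : (forall k, (k < m)%nat -> Cmod (x k) = t) ->
  (forall k, (m <= k)%nat -> x k = 0) ->
  forall k, kalton_peck x k = (RtoC (-2 * ln (INR m)) * x k)%C.
Proof.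
  intros Ht H0 k. destruct (sqnorm_flat x m t Ht H0) as [_ Hsq].
  unfold kalton_peck. rewrite Hsq.
  destruct (Req_dec (Cmod (x k)) 0) as [Hz|Hz].
  { apply Cmod_eq_0 in Hz. rewrite Hz. ring. }
  assert (Hk : (k < m)%nat).
  { destruct (Nat.lt_ge_cases k m) as [|Hge]; auto. rewrite (H0 k Hge), Cmod_0 in Hz; lra. }
  assert (Hm : 0 < INR m) by (apply lt_0_INR; lia).
  assert (Htz : t <> 0) by (rewrite <- (Ht k Hk); exact Hz).
  replace (Cmod (x k) ^ 2 / (INR m * t ^ 2)) with (/ INR m)
    by (rewrite (Ht k Hk); field; split; [exact Htz|lra]).
  rewrite ln_Rinv by exact Hm.
  replace (2 * - ln (INR m)) with (-2 * ln (INR m)) by ring. ring.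
Qed.

Lemma kalton_peck_commutator_coord (a b : seqC) k :
  0 < sqnorm (smul a b) -> 0 < sqnorm b -> a k <> 0 -> b k <> 0 ->
  ssub (kalton_peck (smul a b)) (smul a (kalton_peck b)) k =
  (smul a b k * RtoC (2 * ln (Cmod (a k) ^ 2 * (sqnorm b / sqnorm (smul a b)))))%C.
Proof.
  intros HP HQ Hak Hbk. apply Cmod_gt_0 in Hak, Hbk.
  unfold ssub, kalton_peck, smul. fold (smul a b). rewrite Cmod_mult.
  replace ((Cmod (a k) * Cmod (b k)) ^ 2 / sqnorm (smul a b))
    with ((Cmod (b k) ^ 2 / sqnorm b) * (Cmod (a k) ^ 2 * (sqnorm b / sqnorm (smul a b))))
    by (field; lra).
  rewrite ln_mult by (repeat apply Rmult_lt_0_compat || apply Rdiv_lt_0_compat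
                      || apply pow_lt || apply Rinv_0_lt_compat; lra).
  rewrite Rmult_plus_distr_l, RtoC_plus. ring.
Qed.

Lemma kalton_peck_commutator_sqr_le (a b : seqC) k : in_linf a -> in_l2 b ->
  let A := linfnorm a in let P := sqnorm (smul a b) in let Q := sqnorm b in
  Cmod (ssub (kalton_peck (smul a b)) (smul a (kalton_peck b)) k) ^ 2 <=
  16 * A ^ 2 * Cmod (b k) ^ 2 + 4 * ln (A ^ 2 * (Q / P)) ^ 2 * Cmod (smul a b k) ^ 2.
Proof.
  intros Ha Hb A P Q.
  destruct (Req_dec (Cmod (a k) * Cmod (b k)) 0) as [Hz|Hnz].
  { assert (Hzero : ssub (kalton_peck (smul a b)) (smul a (kalton_peck b)) k = 0).
    { unfold ssub, smul, kalton_peck.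
      destruct (Rmult_integral _ _ Hz) as [Hak|Hbk];
        [apply Cmod_eq_0 in Hak; rewrite Hak|apply Cmod_eq_0 in Hbk; rewrite Hbk]; ring. }
    rewrite Hzero, Cmod_0. pose proof (pow2_ge_0 A); pose proof (pow2_ge_0 (Cmod (b k))).
    pose proof (pow2_ge_0 (ln (A ^ 2 * (Q / P)))).
    pose proof (pow2_ge_0 (Cmod (smul a b k))). nra. }
  assert (Hak : a k <> 0) by (intros E; apply Hnz; rewrite E, Cmod_0; ring).
  assert (Hbk : b k <> 0) by (intros E; apply Hnz; rewrite E, Cmod_0; ring).
  assert (Hal : 0 < Cmod (a k) ^ 2) by (apply pow_lt, Cmod_gt_0, Hak).
  assert (Hbe : 0 < Cmod (b k) ^ 2) by (apply pow_lt, Cmod_gt_0, Hbk).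
  assert (Hab : Cmod (smul a b k) ^ 2 = Cmod (a k) ^ 2 * Cmod (b k) ^ 2)
    by (unfold smul; rewrite Cmod_mult; ring).
  assert (HP : 0 < P).
  { pose proof (Cmod_sqr_le_sqnorm (smul a b) k (in_l2_smul a b Ha Hb)). fold P in H. nra. }
  assert (HQ : 0 < Q) by (pose proof (Cmod_sqr_le_sqnorm b k Hb); fold Q in H; lra).
  assert (HalA : Cmod (a k) ^ 2 <= A ^ 2).
  { apply pow_incr. split; [apply Cmod_ge_0|apply linfnorm_ge, Ha]. }
  assert (HPQ : P <= A ^ 2 * Q) by (apply sqnorm_smul_le; auto).
  rewrite (kalton_peck_commutator_coord a b k HP HQ Hak Hbk), Cmod_mul_RtoC_sqr, Hab.
  fold P Q.
  assert (HQP : 0 < Q / P) by (apply Rdiv_lt_0_compat; lra).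
  assert (H1 : 1 <= A ^ 2 * (Q / P)).
  { unfold Rdiv. rewrite <- Rmult_assoc. apply (Rmult_le_reg_r P); [lra|].
    rewrite Rmult_assoc, Rinv_l; lra. }
  pose proof (mul_ln_scaled_sqr_le _ (A ^ 2) (Q / P) Hal HalA HQP H1). nra.
Qed.

Lemma kalton_peck_centralizer : centralizer kalton_peck.
Proof.
  split; [exact kalton_peck_homogeneous|]. exists 6. split; [lra|]. intros a b Ha Hb.
  pose proof (kalton_peck_commutator_sqr_le a b) as Hpt.
  pose proof (linfnorm_nonneg a Ha) as HA.
  set (A := linfnorm a) in *. set (P := sqnorm (smul a b)) in *. set (Q := sqnorm b) in *.
  set (Lm := ln (A ^ 2 * (Q / P))) in *.
  set (d := ssub (kalton_peck (smul a b)) (smul a (kalton_peck b))).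
  set (g := fun k => 16 * A ^ 2 * Cmod (b k) ^ 2 + 4 * Lm ^ 2 * Cmod (smul a b k) ^ 2).
  assert (Hab := in_l2_smul a b Ha Hb).
  assert (Hdg : forall k, 0 <= Cmod (d k) ^ 2 <= g k)
    by (intros k; split; [apply pow2_ge_0|apply Hpt; auto]).
  assert (Hg : ex_series g).
  { apply (ex_series_plus (fun k => 16 * A ^ 2 * Cmod (b k) ^ 2)
                          (fun k => 4 * Lm ^ 2 * Cmod (smul a b k) ^ 2)).
    - exact (ex_series_scal_l (16 * A ^ 2) _ Hb).
    - exact (ex_series_scal_l (4 * Lm ^ 2) _ Hab). }
  assert (Hd : in_l2 d) by exact (ex_series_nonneg_le _ _ Hdg Hg).
  split; [exact Hd|].
  assert (Hsq : sqnorm d <= 16 * A ^ 2 * Q + 4 * Lm ^ 2 * P).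
  { eapply Rle_trans; [apply (Series_le _ _ Hdg Hg)|]. unfold g.
    rewrite Series_plus, !Series_scal_l.
    - right; reflexivity.
    - exact (ex_series_scal_l (16 * A ^ 2) _ Hb).
    - exact (ex_series_scal_l (4 * Lm ^ 2) _ Hab). }
  assert (HP0 : 0 <= P) by (unfold P; rewrite <- (l2norm_sqr _ Hab); apply pow2_ge_0).
  assert (HQ0 : 0 <= Q) by (unfold Q; rewrite <- (l2norm_sqr _ Hb); apply pow2_ge_0).
  assert (HLm : Lm ^ 2 * P <= 4 * (A ^ 2 * Q)).
  { destruct (Req_dec P 0) as [->|HPn]; [pose proof (pow2_ge_0 A); nra|].
    replace (Lm ^ 2 * P) with (P * ln (A ^ 2 * Q / P) ^ 2)
      by (unfold Lm; replace (A ^ 2 * (Q / P)) with (A ^ 2 * Q / P) by (unfold Rdiv; ring); ring).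
    apply mul_ln_ratio_sqr_le; [lra|apply sqnorm_smul_le; auto]. }
  assert (Hsq6 : sqnorm d <= (6 * A) ^ 2 * Q) by (pose proof (pow2_ge_0 A); nra).
  change (sqrt (sqnorm d) <= 6 * A * sqrt Q).
  rewrite <- (sqrt_pow2 (6 * A)) by lra. rewrite <- sqrt_mult_alt by apply pow2_ge_0.
  apply sqrt_le_1_alt, Hsq6.
Qed.

(** * Nontriviality *)

Lemma exists_signs_sum_sqr_ge (u : nat -> nat -> R) n m : exists eps : nat -> R,
  (forall i, eps i = 1 \/ eps i = -1) /\
  fsum (fun i => fsum (fun k => u i k ^ 2) n) m <=
  fsum (fun k => fsum (fun i => eps i * u i k) m ^ 2) n.
Proof.
  induction m as [|m [eps [Heps IH]]].
  { exists (fun _ => 1). split; [auto|]. apply fsum_nonneg. intros; apply pow2_ge_0. }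
  set (sm k := fsum (fun i => eps i * u i k) m).
  set (t := fsum (fun k => sm k * u m k) n).
  (* the new sign is chosen so that the cross terms [2 sg t] are nonnegative *)
  set (sg := if Rle_dec 0 t then 1 else -1).
  assert (Hsg : sg ^ 2 = 1) by (unfold sg; destruct (Rle_dec 0 t); ring).
  assert (Ht : 0 <= sg * t) by (unfold sg; destruct (Rle_dec 0 t); lra).
  exists (fun i => if Nat.eqb i m then sg else eps i). split.
  { intros i. destruct (Nat.eqb i m); auto. unfold sg; destruct (Rle_dec 0 t); auto. }
  rewrite (fsum_ext (fun k => fsum _ (S m) ^ 2)
            (fun k => sm k ^ 2 + u m k ^ 2 + 2 * sg * (sm k * u m k))).
  - rewrite !fsum_plus, fsum_scal_l. fold t. cbn [fsum]. unfold sm. nra.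
  - intros k _. cbn [fsum]. rewrite Nat.eqb_refl.
    rewrite (fsum_ext _ (fun i => eps i * u i k)).
    + fold (sm k). replace ((sm k + sg * u m k) ^ 2)
        with (sm k ^ 2 + sg ^ 2 * u m k ^ 2 + 2 * sg * (sm k * u m k)) by ring.
      rewrite Hsg. ring.
    + intros i Hi. destruct (Nat.eqb_spec i m); [lia|reflexivity].
Qed.

Lemma fsum_diag_sqr_le (u : nat -> nat -> R) n d : 0 <= d ->
  (forall i, (i < n)%nat -> d <= u i i) ->
  INR n * d ^ 2 <= fsum (fun i => fsum (fun k => u i k ^ 2) n) n.
Proof.
  intros Hd Hu. rewrite <- fsum_const. apply fsum_le. intros i Hi.
  eapply Rle_trans; [|apply (fsum_term_le (fun k => u i k ^ 2) n i); auto].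
  - apply pow_incr. specialize (Hu i Hi). lra.
  - intros; apply pow2_ge_0.
Qed.

Definition unit_vec (i : nat) : seqC := fun k => if Nat.eqb k i then RtoC 1 else RtoC 0.

Lemma unit_vec_sqnorm i : in_l2 (unit_vec i) /\ sqnorm (unit_vec i) = 1.
Proof.
  destruct (sqnorm_fin (unit_vec i) (S i)) as [Hl2 ->].
  { intros k Hk. unfold unit_vec. destruct (Nat.eqb_spec k i); [lia|reflexivity]. }
  split; [exact Hl2|].
  rewrite (fsum_ext _ (fun k => if Nat.eqb k i then 1 else 0)).
  - apply (fsum_kronecker (fun _ => 1)). lia.
  - intros k _. unfold unit_vec. destruct (Nat.eqb k i); rewrite Cmod_R, pow2_abs; ring.
Qed.

Lemma kalton_peck_unit_vec i k : kalton_peck (unit_vec i) k = 0.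
Proof.
  unfold kalton_peck. rewrite (proj2 (unit_vec_sqnorm i)). unfold unit_vec.
  destruct (Nat.eqb k i); [|ring].
  rewrite Cmod_1. replace (1 ^ 2 / 1) with 1 by field. rewrite ln_1, Rmult_0_r. ring.
Qed.

Lemma Re_linear_real_comb (L : seqC -> seqC) (lam : nat -> R) j k : linear_on_l2 L ->
  Re (L (fun i => if Nat.ltb i j then RtoC (lam i) else 0) k) =
  fsum (fun i => lam i * Re (L (unit_vec i) k)) j.
Proof.
  intros [Ladd Lscal].
  assert (Hl2 : forall j, in_l2 (fun i => if Nat.ltb i j then RtoC (lam i) else 0)).
  { intros j'. apply (sqnorm_fin _ j'). intros i Hi.
    destruct (Nat.ltb_spec i j'); [lia|reflexivity]. }
  induction j as [|j IH]; simpl fsum.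
  - set (v := fun i => if Nat.ltb i 0 then RtoC (lam i) else 0).
    replace v with (sscal 0 v)
      by (apply functional_extensionality; intros i; unfold sscal, v; simpl; ring).
    rewrite Lscal by apply Hl2. rewrite re_scal_l. ring.
  - replace (fun i => if Nat.ltb i (S j) then RtoC (lam i) else 0)
      with (sadd (fun i => if Nat.ltb i j then RtoC (lam i) else 0) (sscal (lam j) (unit_vec j))).
    + assert (He : in_l2 (unit_vec j)) by apply unit_vec_sqnorm.
      rewrite Ladd, Lscal, re_plus, re_scal_l, IH
        by first [apply Hl2 | exact He | apply in_l2_sscal, He].
      reflexivity.
    + apply functional_extensionality; intros i. unfold sadd, sscal, unit_vec.
      destruct (Nat.ltb_spec i (S j)), (Nat.ltb_spec i j), (Nat.eqb_spec i j); try lia; subst; ring.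
Qed.

Definition sign_vec (n : nat) (eps : nat -> R) : seqC :=
  fun i => if Nat.ltb i n then RtoC (eps i / sqrt (INR n)) else 0.

Lemma Cmod_sign_vec n eps i : (forall i, eps i = 1 \/ eps i = -1) -> (i < n)%nat ->
  Cmod (sign_vec n eps i) = / sqrt (INR n).
Proof.
  intros Heps Hi. unfold sign_vec. destruct (Nat.ltb_spec i n); [|lia].
  assert (Hsq : 0 < sqrt (INR n)) by (apply sqrt_lt_R0, lt_0_INR; lia).
  rewrite Cmod_R. unfold Rdiv. rewrite Rabs_mult, Rabs_inv, (Rabs_pos_eq (sqrt _)) by lra.
  replace (Rabs (eps i)) with 1
    by (destruct (Heps i) as [-> | ->]; unfold Rabs; destruct Rcase_abs; lra).
  ring.
Qed.

Lemma sign_vec_zero n eps i : (n <= i)%nat -> sign_vec n eps i = 0.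
Proof. intros Hi. unfold sign_vec. destruct (Nat.ltb_spec i n); [lia|reflexivity]. Qed.

Lemma sign_vec_neq0 n eps i : (forall i, eps i = 1 \/ eps i = -1) -> (i < n)%nat ->
  sign_vec n eps i <> 0.
Proof.
  intros Heps Hi E. pose proof (Cmod_sign_vec n eps i Heps Hi) as Hc. rewrite E, Cmod_0 in Hc.
  assert (0 < / sqrt (INR n)) by (apply Rinv_0_lt_compat, sqrt_lt_R0, lt_0_INR; lia). lra.
Qed.

Lemma kalton_peck_sign_vec n eps k : (forall i, eps i = 1 \/ eps i = -1) ->
  kalton_peck (sign_vec n eps) k = (RtoC (-2 * ln (INR n)) * sign_vec n eps k)%C.
Proof.
  intros Heps.
  exact (kalton_peck_flat _ n _ (fun i => Cmod_sign_vec n eps i Heps) (sign_vec_zero n eps) k).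
Qed.

Lemma sign_vec_sqnorm n eps : (forall i, eps i = 1 \/ eps i = -1) -> (0 < n)%nat ->
  in_l2 (sign_vec n eps) /\ sqnorm (sign_vec n eps) = 1.
Proof.
  intros Heps Hn.
  destruct (sqnorm_flat _ n _ (fun i => Cmod_sign_vec n eps i Heps) (sign_vec_zero n eps))
    as [Hx ->].
  split; [exact Hx|]. assert (Hn0 : 0 < INR n) by (apply lt_0_INR; lia).
  rewrite pow_inv, pow2_sqrt by lra. field. lra.
Qed.

Lemma Re_kalton_peck_sub_linear_sign_vec (L : seqC -> seqC) n eps k :
  linear_on_l2 L -> (forall i, eps i = 1 \/ eps i = -1) -> (k < n)%nat ->
  Re (ssub (kalton_peck (sign_vec n eps)) (L (sign_vec n eps)) k) =
  - / sqrt (INR n) *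
    fsum (fun i => eps i * ((if Nat.eqb i k then 2 * ln (INR n) else 0) + Re (L (unit_vec i) k))) n.
Proof.
  intros HL Heps Hk. set (s := / sqrt (INR n)).
  unfold ssub, Cminus.
  rewrite (kalton_peck_sign_vec n eps k Heps).
  replace (sign_vec n eps k) with (RtoC (eps k / sqrt (INR n)))
    by (unfold sign_vec; destruct (Nat.ltb_spec k n); [reflexivity|lia]).
  rewrite re_plus, <- RtoC_mult, re_RtoC.
  change (Re (- L (sign_vec n eps) k)%C) with (- Re (L (sign_vec n eps) k)).
  unfold sign_vec. rewrite (Re_linear_real_comb L (fun i => eps i / sqrt (INR n)) n k HL).
  rewrite (fsum_ext _ (fun i => s * (eps i * Re (L (unit_vec i) k))))
    by (intros; unfold s, Rdiv; ring).
  rewrite (fsum_ext (fun i => eps i * ((if Nat.eqb i k then _ else 0) + _))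
             (fun i => (if Nat.eqb i k then eps i * (2 * ln (INR n)) else 0)
                       + eps i * Re (L (unit_vec i) k)))
    by (intros i _; destruct (Nat.eqb i k); ring).
  rewrite fsum_plus, fsum_kronecker, fsum_scal_l by exact Hk.
  unfold s, Rdiv. ring.
Qed.

Lemma kalton_peck_nontrivial : ~ trivial_centralizer kalton_peck.
Proof.
  intros [L [HL [K HK]]].
  assert (Hdiag : forall i, Cmod (L (unit_vec i) i) <= K).
  { intros i. destruct (unit_vec_sqnorm i) as [He He1].
    destruct (HK _ He) as [Hd Hdn].
    { change (sqrt (sqnorm (unit_vec i)) <= 1). rewrite He1, sqrt_1. lra. }
    replace (L (unit_vec i) i) with (- ssub (kalton_peck (unit_vec i)) (L (unit_vec i)) i)%C
      by (unfold ssub; rewrite kalton_peck_unit_vec; ring).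
    rewrite Cmod_opp. eapply Rle_trans; [apply Cmod_le_l2norm, Hd|exact Hdn]. }
  assert (HK0 : 0 <= K) by (eapply Rle_trans; [apply Cmod_ge_0|apply (Hdiag 0%nat)]).
  destruct (INR_archimed 1 (exp K)) as [n Hn]; [lra|]. rewrite Rmult_1_r in Hn.
  assert (Hn0 : 0 < INR n) by (pose proof (exp_pos K); lra).
  assert (Hnpos : (0 < n)%nat) by (apply INR_lt; simpl; lra).
  assert (Hlog : K < ln (INR n))
    by (rewrite <- (ln_exp K); apply ln_increasing; [apply exp_pos|lra]).
  set (c := 2 * ln (INR n)).
  set (u i k := (if Nat.eqb i k then c else 0) + Re (L (unit_vec i) k)).
  destruct (exists_signs_sum_sqr_ge u n n) as [eps [Heps Hsigns]].
  destruct (sign_vec_sqnorm n eps Heps Hnpos) as [Hx Hx1].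
  set (x := sign_vec n eps) in *.
  destruct (HK x Hx) as [Hd Hdn]; [change (sqrt (sqnorm x) <= 1); rewrite Hx1, sqrt_1; lra|].
  assert (Hupper : / INR n * fsum (fun k => fsum (fun i => eps i * u i k) n ^ 2) n <= K ^ 2).
  { rewrite <- fsum_scal_l.
    apply (Rle_trans _ (fsum (fun k => Cmod (ssub (kalton_peck x) (L x) k) ^ 2) n)).
    - apply fsum_le. intros k Hk. rewrite Cmod2_alt.
      unfold x. rewrite (Re_kalton_peck_sub_linear_sign_vec L n eps k HL Heps Hk).
      pose proof (pow2_ge_0 (Im (ssub (kalton_peck (sign_vec n eps)) (L (sign_vec n eps)) k))).
      rewrite <- (pow2_sqrt (INR n)) at 1 by lra. rewrite <- pow_inv. unfold u, c. nra.
    - eapply Rle_trans; [apply fsum_Cmod_sqr_le_sqnorm, Hd|].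
      rewrite <- (l2norm_sqr _ Hd). apply pow_incr. split; [apply sqrt_pos|exact Hdn]. }
  assert (Hlower : INR n * (c - K) ^ 2 <= fsum (fun i => fsum (fun k => u i k ^ 2) n) n).
  { apply fsum_diag_sqr_le; [unfold c; lra|]. intros i _. unfold u. rewrite Nat.eqb_refl.
    pose proof (re_le_Cmod (L (unit_vec i) i)). pose proof (Hdiag i).
    unfold Rabs in *; destruct Rcase_abs; lra. }
  assert (Hsq : (c - K) ^ 2 <= K ^ 2).
  { apply (Rmult_le_reg_l (INR n)); [lra|].
    apply (Rmult_le_compat_l (INR n)) in Hupper; [|lra].
    rewrite <- Rmult_assoc, Rinv_r, Rmult_1_l in Hupper by lra. lra. }
  assert (K < c - K) by (unfold c; lra). nra.
Qed.

(** * The eigenvalues kappa(n) *)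

Fixpoint largest_nat_le (d : R) (n : nat) : nat :=
  match n with
  | O => O
  | S p => if Rle_dec (INR (S p)) d then S p else largest_nat_le d p
  end.

Lemma largest_nat_le_bound d n : (largest_nat_le d n <= n)%nat.
Proof. induction n; simpl; [lia|]. destruct (Rle_dec _ d); lia. Qed.

Lemma largest_nat_le_le d n : (0 < largest_nat_le d n)%nat -> INR (largest_nat_le d n) <= d.
Proof.
  induction n; cbn [largest_nat_le]; [lia|].
  destruct (Rle_dec (INR (S n)) d); auto.
Qed.

Lemma largest_nat_le_max d n j : (j <= n)%nat -> INR j <= d -> (j <= largest_nat_le d n)%nat.
Proof.
  induction n; intros Hj Hd; cbn [largest_nat_le]; [lia|].
  destruct (Rle_dec (INR (S n)) d); [exact Hj|].
  destruct (Nat.eq_dec j (S n)) as [->|]; [lra|]. apply IHn; auto; lia.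
Qed.

Lemma is_lim_seq_largest_nat_le (delta : nat -> R) : is_lim_seq delta p_infty ->
  is_lim_seq (fun n => INR (largest_nat_le (delta n) n)) p_infty.
Proof.
  intros Hlim. apply is_lim_seq_spec. intros M.
  destruct (INR_archimed 1 M) as [j Hj]; [lra|]. rewrite Rmult_1_r in Hj.
  apply is_lim_seq_spec in Hlim. destruct (Hlim (INR j)) as [N HN].
  exists (max N j). intros n Hn.
  assert (Hj' : (j <= largest_nat_le (delta n) n)%nat)
    by (apply largest_nat_le_max; [lia|left; apply HN; lia]).
  apply le_INR in Hj'. lra.
Qed.

Theorem proposition5p7 :
  forall delta : nat -> R,
    (forall n, (1 <= n)%nat -> 1 < delta n) ->
    is_lim_seq delta p_infty ->
    exists (Om : seqC -> seqC) (kappa : nat -> R) (a : nat -> seqC),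
      nontrivial_centralizer Om /\
      (forall n, (1 <= n)%nat -> 0 < kappa n /\ kappa n <= delta n) /\
      is_lim_seq kappa p_infty /\
      (forall n, (1 <= n)%nat ->
         in_l2 (a n) /\
         (exists k, a n k <> RtoC 0) /\
         (forall k, (n <= k)%nat -> a n k = RtoC 0) /\
         (forall k, Om (a n) k = Cmult (RtoC (-2 * ln (kappa n))) (a n k))).
Proof.
  intros delta Hdelta Hlim.
  set (m n := largest_nat_le (delta n) n).
  assert (Hm1 : forall n, (1 <= n)%nat -> (1 <= m n)%nat)
    by (intros n Hn; apply largest_nat_le_max; [exact Hn|simpl; specialize (Hdelta n Hn); lra]).
  set (ones := fun _ : nat => 1).
  assert (Hones : forall i, ones i = 1 \/ ones i = -1) by (left; reflexivity).
  exists kalton_peck, (fun n => INR (m n)), (fun n => sign_vec (m n) ones).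
  split; [exact (conj kalton_peck_centralizer kalton_peck_nontrivial)|].
  split.
  { intros n Hn. specialize (Hm1 n Hn).
    split; [apply lt_0_INR; lia|apply largest_nat_le_le; fold (m n); lia]. }
  split; [exact (is_lim_seq_largest_nat_le delta Hlim)|].
  intros n Hn. specialize (Hm1 n Hn). pose proof (largest_nat_le_bound (delta n) n).
  split; [apply sign_vec_sqnorm; [exact Hones|lia]|].
  split; [exists 0%nat; apply sign_vec_neq0; [exact Hones|lia]|].
  split; [intros k Hk; apply sign_vec_zero; fold (m n) in *; lia|].
  intros k. apply kalton_peck_sign_vec, Hones.
Qed.
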